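(* Let $\mathbf{p}=(p_1,p_2,p_3,p_4)$ with all $p_i>0$, and let $\mathcal{T}_4(\mathbf{p})$ be the tessellation of $\mathbb{R}^4$ constructed below. Then there is no simplex $K\in\mathcal{T}_4(\mathbf{p})$ having an edge whose direction vector is $\pm p_1e_1\pm p_2e_2\pm 2p_3e_3\pm 3p_4e_4$ for any choice of the signs, where $e_1,\dots,e_4$ is the standard basis of $\mathbb{R}^4$. (Equivalently, the vector $(1,1,2,3)$ is not realized as an edge pattern $(|v_1|/p_1,\dots,|v_4|/p_4)$ of an edge $v$ of an element of $\mathcal{T}_4(\mathbf{p})$.)
   Context: Construction of $\mathcal{T}_d(\mathbf{p})$ for $d=4$: inductively for $m=1,\dots,4$ define a collection $\mathcal{T}_m$ of $m$-simplices in $\mathbb{R}^m$ with a vertex coloring $c_m$ with colors in $\{0,\dots,m\}$. For $m=1$: vertices $A_z=zp_1$ ($z\in\mathbb{Z}$), simplices the segments between $zp_1$ and $(z+1)p_1$, $c_1(A_z)=z\bmod 2$. For $2\le m\le 4$: for each $K\in\mathcal{T}_{m-1}$ label its vertices $A_0,\dots,A_{m-1}$ so that $c_{m-1}(A_i)=i$, set $B^K_j=(A_{j\bmod m},jp_m)\in\mathbb{R}^m$ for $j\in\mathbb{Z}$, and $L^{K,z}=\operatorname{conv}\{B^K_z,\dots,B^K_{z+m}\}$ for $z\in\mathbb{Z}$; $\mathcal{T}_m=\{L^{K,z}\}$, with vertices $(A,jp_m)$ ($A$ a vertex of $\mathcal{T}_{m-1}$, $j\equiv c_{m-1}(A)\pmod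 m$) colored $c_m((A,jp_m))=j\bmod(m+1)$. Then $\mathcal{T}_4(\mathbf{p})=\mathcal{T}_4$. An edge of a simplex is the segment between two of its vertices; its direction vector is the difference of these vertices. *)

From HB Require Import structures.
From mathcomp Require Import all_boot all_order all_algebra.
From mathcomp Require Import reals.
Set Implicit Arguments. Unset Strict Implicit. Unset Printing Implicit Defensive.
Import Order.TTheory GRing.Theory Num.Theory.
Local Open Scope ring_scope.

(* Encoding: a vertex of T_m is the point (z_1 p_1, ..., z_m p_m) of R^m;
   we record it by its integer coordinate sequence [:: z_1; ...; z_m].
   A simplex is recorded by the sequence of its vertices. *)

Definition color (m : nat) (v : seq int) : int := ((last 0 v) %% (m.+1)%:Z)%Z.

Inductive tess : nat -> seq (seq int) -> Prop :=
| tess1 (z : int) : tess 1 [:: [:: z]; [:: z + 1]]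
| tessS (n : nat) (K : seq (seq int)) (A : nat -> seq int) (z : int) :
    tess n K ->
    perm_eq K (map A (iota 0 n.+1)) ->
    (forall i, (i < n.+1)%N -> color n (A i) = i%:Z) ->
    tess n.+1
      [seq rcons (A (absz ((z + k%:Z) %% (n.+1)%:Z)%Z)) (z + k%:Z) | k <- iota 0 n.+2].

Definition pt (R : realType) (p : 'I_4 -> R) (v : seq int) : 'rV[R]_4 :=
  \row_(i < 4) ((nth 0 v i)%:~R * p i).

Definition edge_pat (i : 'I_4) : nat := nth 0%N [:: 1; 1; 2; 3]%N i.

(* Every vertex (A, j p_m) of T_m carries the color j mod m+1 and its prefix A
   is a vertex of T_(m-1) of that color, i.e. its last coordinate is also j mod m+1.
   For m = 4 the third and fourth integer coordinates of every vertex are thus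
   congruent mod 4, so along any edge the differences of these coordinates are
   congruent mod 4; but +-2 and +-3 are not. *)
From HB Require Import structures.
From mathcomp Require Import all_boot all_order all_algebra.
From mathcomp Require Import reals.
From mathcomp Require Import zify.
Import Order.TTheory GRing.Theory Num.Theory.
Local Open Scope ring_scope.

Lemma absz_modz_lt (z : int) (n : nat) : (absz (z %% (n.+1)%:Z)%Z < n.+1)%N.
Proof. lia. Qed.

Lemma tess_vertex_size {n K} : tess n K -> {in K, forall v, size v = n}.
Proof.
elim=> [z | m K0 A z _ IH permK _] v.
  by rewrite !inE => /orP[] /eqP->.
case/mapP=> k _ ->; rewrite size_rcons IH // (perm_mem permK).
by rewrite map_f // mem_iota absz_modz_lt.
Qed.

Lemma tess_vertex_congr {n K} :
  tess n.+2 K -> {in K, forall v, (v`_n = v`_n.+1 %[mod (n.+2)%:Z])%Z}.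
Proof.
move=> tessK; inversion tessK as [|m K0 A z tessK0 permK colA]; subst.
move=> _ /mapP[k _ ->]; set j := z + k%:Z.
have lt_j := absz_modz_lt j n.+1.
have sizeA : size (A (absz (j %% (n.+2)%:Z)%Z)) = n.+1.
  by rewrite (tess_vertex_size tessK0) // (perm_mem permK) map_f // mem_iota.
have := colA _ lt_j; rewrite /color -(nth_last 0) sizeA /= => colAj.
rewrite !nth_rcons sizeA ltnSn ltnn eqxx /= colAj gez0_abs ?modz_mod //.
by rewrite modz_ge0.
Qed.

Lemma scaled_int_diff_abs (R : realType) (a b : int) (c q : R) (n : nat) :
  0 < q -> (c = 1 \/ c = -1) -> a%:~R * q - b%:~R * q = c * n%:R * q ->
  `|a - b|%N = n.
Proof.
move=> q_gt0 c_sign; rewrite -mulrBl -intrB => /(mulIf (lt0r_neq0 q_gt0)).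
case: c_sign => ->; rewrite ?mul1r ?mulN1r pmulrn -?rmorphN => /intr_inj -> //.
exact: abszN.
Qed.

Lemma modz4_absz_diff_neq_2_3 (a b c d : int) :
  (a = b %[mod 4])%Z -> (c = d %[mod 4])%Z ->
  `|a - c|%N = 2%N -> `|b - d|%N = 3%N -> False.
Proof. lia. Qed.

Theorem lemma2 (R : realType) (p : 'I_4 -> R) :
  (forall i, 0 < p i) ->
  ~ exists (K : seq (seq int)) (u v : seq int) (s : 'I_4 -> R),
      [/\ tess 4 K, u \in K, v \in K & u != v] /\
      (forall i, s i = 1 \/ s i = -1) /\
      pt p u - pt p v = \row_(i < 4) (s i * (edge_pat i)%:R * p i).
Proof.
move=> p_gt0 [K [u [v [s [[tessK uK vK _] [s_sign edge_uv]]]]]].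
have coord_diff (i : 'I_4) : `|(u`_i - v`_i)%R|%N = edge_pat i.
  have := congr1 (fun M : 'rV[R]_4 => M ord0 i) edge_uv; rewrite /= !mxE.
  exact: scaled_int_diff_abs (p_gt0 i) (s_sign i).
exact: modz4_absz_diff_neq_2_3 (tess_vertex_congr tessK _ uK)
  (tess_vertex_congr tessK _ vK) (coord_diff (@Ordinal 4 2 isT))
  (coord_diff (@Ordinal 4 3 isT)).
Qed.
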